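(* Let ${\bm X}$ be a finite set with a pseudometric $d_{\bm X}$, let $C(x,x')=d_{\bm X}(x,x')$, and let $m^{\bm X}_\bullet$ be an irreducible and aperiodic Markov transition kernel on ${\bm X}$. Then for any $\nu_1,\nu_2\in\mathcal{P}({\bm X})$, $$\lim_{k\to\infty}d^{(k)}_{\mathrm{WL}}\big(({\bm X},m^{\bm X}_\bullet,\nu_1),({\bm X},m^{\bm X}_\bullet,\nu_2);C\big)=0.$$
   Context: $\mathcal{C}(\alpha,\beta)$ denotes the set of couplings. For finite Markov chains $\mathcal{X}=({\bm X},m^{\bm X}_\bullet,\nu^{\bm X})$, $\mathcal{Y}=({\bm Y},m^{\bm Y}_\bullet,\nu^{\bm Y})$, a Markovian coupling is a (possibly time-inhomogeneous) Markov chain $(X_t,Y_t)_{t\in\mathbb{N}}$ on ${\bm X}\times{\bm Y}$ with $\mathrm{law}(X_0,Y_0)\in\mathcal{C}(\nu^{\bm X},\nu^{\bm Y})$ and, for all $t,x,y$, the conditional law of $(X_{t+1},Y_{t+1})$ given $(X_t,Y_t)=(x,y)$ in $\mathcal{C}(m^{\bm X}_x,m^{\bm Y}_y)$. $d^{(k)}_{\mathrm{WL}}(\mathcal{X},\mathcal{Y};C)=\inf\mathbb{E}\,C(X_k,Y_k)$ over all Markovian couplings. *)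

From HB Require Import structures.
From mathcomp Require Import all_boot all_order all_algebra.
From mathcomp Require Import all_classical all_reals all_analysis.
Set Implicit Arguments. Unset Strict Implicit. Unset Printing Implicit Defensive.
Import Order.TTheory GRing.Theory Num.Theory.
Local Open Scope ring_scope.
Local Open Scope classical_set_scope.

Section WL.
Variable R : realType.

Definition is_prob (T : finType) (mu : T -> R) : Prop :=
  (forall x, 0 <= mu x) /\ \sum_(x : T) mu x = 1.

Definition is_markov_kernel (T : finType) (m : T -> T -> R) : Prop :=
  forall x, is_prob (m x).

Definition is_pseudometric (T : finType) (d : T -> T -> R) : Prop :=
  (forall x, d x x = 0) /\ (forall x y, d x y = d y x) /\
  (forall x y z, d x z <= d x y + d y z).

Fixpoint kpow (T : finType) (m : T -> T -> R) (n : nat) : T -> T -> R :=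
  match n with
  | 0 => fun x y => (x == y)%:R
  | n'.+1 => fun x y => \sum_(z : T) kpow m n' x z * m z y
  end.

Definition irreducible (T : finType) (m : T -> T -> R) : Prop :=
  forall x y : T, exists n : nat, 0 < kpow m n x y.

Definition aperiodic (T : finType) (m : T -> T -> R) : Prop :=
  forall x : T, forall d : nat,
    (forall n : nat, (0 < n)%N -> 0 < kpow m n x x -> (d %| n)%N) -> d = 1%N.

Definition is_coupling (A B : finType) (alpha : A -> R) (beta : B -> R)
  (pi : A * B -> R) : Prop :=
  (forall z, 0 <= pi z) /\
  (forall a, \sum_(b : B) pi (a, b) = alpha a) /\
  (forall b, \sum_(a : A) pi (a, b) = beta b).

(* A Markovian coupling is given by the initial law pi0 of (X_0,Y_0) and the
   (time-dependent) transition kernels P t (x,y) of (X_{t+1},Y_{t+1}). *)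
Definition is_markovian_coupling (X Y : finType)
  (mX : X -> X -> R) (nuX : X -> R) (mY : Y -> Y -> R) (nuY : Y -> R)
  (pi0 : X * Y -> R) (P : nat -> X * Y -> X * Y -> R) : Prop :=
  is_coupling nuX nuY pi0 /\
  forall t (x : X) (y : Y), is_coupling (mX x) (mY y) (P t (x, y)).

Fixpoint coupling_law (X Y : finType) (pi0 : X * Y -> R)
  (P : nat -> X * Y -> X * Y -> R) (k : nat) : X * Y -> R :=
  match k with
  | 0 => pi0
  | k'.+1 => fun w => \sum_(z : X * Y) coupling_law pi0 P k' z * P k' z w
  end.

Definition expected_cost (X Y : finType) (pi0 : X * Y -> R)
  (P : nat -> X * Y -> X * Y -> R) (k : nat) (C : X -> Y -> R) : R :=
  \sum_(z : X * Y) coupling_law pi0 P k z * C z.1 z.2.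

Definition dWL (k : nat) (X Y : finType)
  (mX : X -> X -> R) (nuX : X -> R) (mY : Y -> Y -> R) (nuY : Y -> R)
  (C : X -> Y -> R) : R :=
  inf [set r : R | exists pi0 P,
         is_markovian_coupling mX nuX mY nuY pi0 P /\
         r = expected_cost pi0 P k C].

End WL.

From HB Require Import structures.
From mathcomp Require Import all_boot all_order all_algebra.
From mathcomp Require Import all_classical all_reals all_analysis.
From mathcomp Require Import lra ring zify.

(* Couple the two chains by the coalescing coupling: they move independently
   until they first meet and together afterwards.  Then d(X_k, Y_k) vanishes
   once they have met, so E d(X_k, Y_k) <= (sum of d) * P(X_k <> Y_k).
   Started from (x, y), the chains have met at time n with probability at
   least sum_u m^n(x, u) m^n(y, u).  This is positive for some n: aperiodicity
   gives consecutive return times n0 and n0 + 1 to x, and if y reaches x in a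
   steps then both x and y reach x in a (n0 + 1) = a + a n0 steps.  By
   finiteness one horizon N and one eps > 0 serve all starting pairs, so
   P(X_k <> Y_k) shrinks by the factor 1 - eps every N steps. *)

Set Implicit Arguments. Unset Strict Implicit. Unset Printing Implicit Defensive.
Import Order.TTheory GRing.Theory Num.Theory.
Import numFieldNormedType.Exports.

Section AdditiveSemigroup.
Variable S : nat -> Prop.
Hypothesis S_add : forall a b, S a -> S b -> S (a + b).
Hypothesis S_gt0 : forall n, S n -> 0 < n.
Hypothesis S_gcd1 : forall d, (forall n, S n -> d %| n) -> d = 1.

Let S_mul k a : S a -> S (k.+1 * a).
Proof.
move=> Sa; elim: k => [|k IH]; first by rewrite mul1n.
by rewrite mulSn; apply: S_add.
Qed.

(* Euclid's algorithm on gaps: a gap d > 1 and some c in S not divisible by d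
   yield the smaller gap d - c %% d. *)
Lemma consecutive_of_gap d : 0 < d -> (exists a, S a /\ S (a + d)) ->
  exists n, S n /\ S n.+1.
Proof.
elim/ltn_ind: d => d IH d_gt0 [a [Sa Sad]].
have [d1|d_neq1] := eqVneq d 1; first by exists a; rewrite -addn1 -d1.
have /existsNP [c /not_implyP [Sc d_ndvd_c]] : ~ (forall n, S n -> d %| n).
  by move=> /S_gcd1 d1; rewrite d1 eqxx in d_neq1.
set q := c %/ d; set r := c %% d.
have r_gt0 : 0 < r by rewrite lt0n; apply/negP.
have r_lt_d : r < d by rewrite ltn_pmod.
apply: (IH (d - r)); [lia | lia |].
exists (q.+1 * a + c); split; first by apply: S_add => //; apply: S_mul.
have -> : q.+1 * a + c + (d - r) = q.+1 * (a + d).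
  by rewrite {1}(divn_eq c d) -/q -/r mulnDr mulSn; lia.
exact: S_mul.
Qed.

Lemma consecutive_elements : exists n, S n /\ S n.+1.
Proof.
have [a Sa] : exists a, S a.
  apply/not_existsP => noS.
  by have := @S_gcd1 0 (fun n Sn => False_ind _ (noS n Sn)).
apply: (@consecutive_of_gap a); first exact: S_gt0.
by exists a; split => //; apply: S_add.
Qed.

End AdditiveSemigroup.

Local Open Scope ring_scope.
Local Open Scope classical_set_scope.

Lemma sumr_pair (V : nmodType) (X Y : finType) (F : X * Y -> V) :
  \sum_w F w = \sum_a \sum_b F (a, b).
Proof. by rewrite pair_bigA; apply: eq_bigr => -[]. Qed.

Lemma sumr_mul_eqr (R : pzSemiRingType) (T : finType) (F : T -> R) y :
  \sum_x F x * (x == y)%:R = F y.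
Proof.
rewrite (bigD1 y) //= eqxx mulr1 big1 ?addr0 // => x /negbTE ->.
by rewrite mulr0.
Qed.

Lemma sumr_mul_eql (R : pzSemiRingType) (T : finType) (F : T -> R) x :
  \sum_y (x == y)%:R * F y = F x.
Proof.
rewrite (bigD1 x) //= eqxx mul1r big1 ?addr0 // => y /negbTE.
by rewrite eq_sym => ->; rewrite mul0r.
Qed.

Section KernelPowers.
Variables (R : realType) (T : finType) (m : T -> T -> R).
Hypothesis mK : is_markov_kernel m.

Lemma kpow_add a b x y :
  kpow m (a + b)%N x y = \sum_z kpow m a x z * kpow m b z y.
Proof.
elim: b y => [|b IH] y; first by rewrite addn0 sumr_mul_eqr.
rewrite addnS /=; under eq_bigr => w _ do rewrite IH big_distrl /=.
rewrite exchange_big /=; apply: eq_bigr => z _.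
by rewrite big_distrr /=; apply: eq_bigr => w _; rewrite mulrA.
Qed.

Lemma kpowSl n x y : kpow m n.+1 x y = \sum_z m x z * kpow m n z y.
Proof.
rewrite -add1n kpow_add; apply: eq_bigr => z _.
by rewrite /= (sumr_mul_eql (fun w => m w z)).
Qed.

Lemma kpow_ge0 n x y : 0 <= kpow m n x y.
Proof.
elim: n y => [|n IH] y /=; first by rewrite ler0n.
by apply: sumr_ge0 => z _; apply: mulr_ge0 => //; case: (mK z).
Qed.

Lemma kpow_sum1 n x : \sum_y kpow m n x y = 1.
Proof.
elim: n => [|n IH] /=; first by under eq_bigr do rewrite -[_%:R]mulr1; rewrite sumr_mul_eql.
rewrite exchange_big /= -IH; apply: eq_bigr => z _.
by rewrite -big_distrr /=; case: (mK z) => _ ->; rewrite mulr1.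
Qed.

Lemma kpow_le1 n x y : kpow m n x y <= 1.
Proof.
rewrite -(kpow_sum1 n x) (bigD1 y) //= lerDl.
by apply: sumr_ge0 => z _; apply: kpow_ge0.
Qed.

Lemma kpow_add_gt0 a b x y z : 0 < kpow m a x z -> 0 < kpow m b z y ->
  0 < kpow m (a + b)%N x y.
Proof.
move=> xz_gt0 zy_gt0; rewrite kpow_add (bigD1 z) //=.
apply: (lt_le_trans (mulr_gt0 xz_gt0 zy_gt0)); rewrite lerDl.
by apply: sumr_ge0 => w _; apply: mulr_ge0; apply: kpow_ge0.
Qed.

Lemma kpow_mul_gt0 k n x : 0 < kpow m n x x -> 0 < kpow m (k * n)%N x x.
Proof.
move=> xx_gt0; elim: k => [|k IH]; first by rewrite mul0n /= eqxx ltr01.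
by rewrite mulSn; apply: kpow_add_gt0 xx_gt0 IH.
Qed.

Lemma kpow_common_return x y : irreducible m -> aperiodic m ->
  exists n, 0 < kpow m n x x /\ 0 < kpow m n y x.
Proof.
move=> irr aper.
pose S n := (0 < n)%N /\ 0 < kpow m n x x.
have [|||n0 [[_ n0_gt0] [_ n0S_gt0]]] := @consecutive_elements S.
- move=> a b [a_gt0 Sa] [_ Sb]; split; first by rewrite addn_gt0 a_gt0.
  exact: kpow_add_gt0 Sa Sb.
- by move=> n [].
- by move=> d dvd_S; apply: (aper x) => n n_gt0 Sn; apply: dvd_S.
have [a yx_gt0] := irr y x.
exists (a * n0.+1)%N; split; first exact: kpow_mul_gt0 n0S_gt0.
by rewrite mulnS; apply: kpow_add_gt0 yx_gt0 (kpow_mul_gt0 _ n0_gt0).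
Qed.

Definition overlap n x y := \sum_u kpow m n x u * kpow m n y u.

Lemma overlapS n x y :
  overlap n.+1 x y = \sum_a \sum_b m x a * m y b * overlap n a b.
Proof.
rewrite /overlap; under eq_bigr => u _ do rewrite !kpowSl big_distrl /=.
under eq_bigr => u _ do under eq_bigr => a _ do rewrite big_distrr /=.
rewrite exchange_big /=; apply: eq_bigr => a _.
rewrite exchange_big /=; apply: eq_bigr => b _.
by rewrite big_distrr /=; apply: eq_bigr => u _; rewrite mulrACA.
Qed.

Lemma overlap_le1 n x y : overlap n x y <= 1.
Proof.
rewrite -(kpow_sum1 n x); apply: ler_sum => u _.
by rewrite -[leRHS]mulr1 ler_wpM2l ?kpow_ge0 ?kpow_le1.
Qed.

Lemma overlap_gt0 x y : irreducible m -> aperiodic m ->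
  exists n, 0 < overlap n x y.
Proof.
move=> irr aper; have [n [xx_gt0 yx_gt0]] := kpow_common_return x y irr aper.
exists n; rewrite /overlap (bigD1 x) //= ltr_wpDr ?mulr_gt0 //.
by apply: sumr_ge0 => u _; apply: mulr_ge0; apply: kpow_ge0.
Qed.

End KernelPowers.

Lemma natr_negb (R : pzRingType) (b : bool) : (~~ b)%:R = 1 - b%:R :> R.
Proof. by case: b; rewrite ?subrr ?subr0. Qed.

Lemma finite_uniform_threshold (T : finType) (P : nat -> T -> Prop) :
  (forall n t, P n t -> P n.+1 t) -> (forall t, exists n, P n t) ->
  exists N, forall t, P N t.
Proof.
move=> P_mono /choice [f Pf]; exists (\sum_t f t)%N => t.
rewrite (bigD1 t) //=; elim: (\sum_(s | s != t) f s)%N => [|k IH].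
  by rewrite addn0.
by rewrite addnS; apply: P_mono.
Qed.

Lemma pseudometric_ge0 (R : realType) (T : finType) (d : T -> T -> R) :
  is_pseudometric d -> forall x y, 0 <= d x y.
Proof.
by move=> [d0 [dC dtri]] x y; have := dtri x y x; rewrite d0 (dC y x); lra.
Qed.

Lemma product_coupling (R : realType) (X Y : finType) (alpha : X -> R)
  (beta : Y -> R) : is_prob alpha -> is_prob beta ->
  is_coupling alpha beta (fun z => alpha z.1 * beta z.2).
Proof.
move=> [alpha_ge0 alpha1] [beta_ge0 beta1].
split; first by move=> z; apply: mulr_ge0.
by split=> [a|b] /=; rewrite -?big_distrr -?big_distrl /= ?alpha1 ?beta1 ?mulr1 ?mul1r.
Qed.

Section CouplingLaw.
Variables (R : realType) (X Y : finType) (pi0 : X * Y -> R).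

Lemma coupling_law_ge0 (P : nat -> X * Y -> X * Y -> R) k z :
  (forall z, 0 <= pi0 z) -> (forall t z w, 0 <= P t z w) ->
  0 <= coupling_law pi0 P k z.
Proof.
move=> pi0_ge0 P_ge0; elim: k z => [|k IH] z //=.
by apply: sumr_ge0 => w _; apply: mulr_ge0.
Qed.

Lemma coupling_lawD (Q : X * Y -> X * Y -> R) k n w :
  coupling_law pi0 (fun=> Q) (k + n) w =
  \sum_z coupling_law pi0 (fun=> Q) k z * kpow Q n z w.
Proof.
elim: n w => [|n IH] w; first by rewrite addn0 sumr_mul_eqr.
rewrite addnS /=; under eq_bigr => v _ do rewrite IH big_distrl /=.
rewrite exchange_big /=; apply: eq_bigr => z _.
by rewrite big_distrr /=; apply: eq_bigr => v _; rewrite mulrA.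
Qed.

Lemma expected_cost_ge0 mX nuX mY nuY P k (C : X -> Y -> R) :
  (forall x y, 0 <= C x y) -> is_markovian_coupling mX nuX mY nuY pi0 P ->
  0 <= expected_cost pi0 P k C.
Proof.
move=> C_ge0 [[pi0_ge0 _] P_coupling].
apply: sumr_ge0 => z _; apply: mulr_ge0 => //.
by apply: coupling_law_ge0 => // t [x y] w; case: (P_coupling t x y).
Qed.

End CouplingLaw.

Section WLBounds.
Variables (R : realType) (X Y : finType) (k : nat).
Variables (mX : X -> X -> R) (nuX : X -> R) (mY : Y -> Y -> R) (nuY : Y -> R).
Variable C : X -> Y -> R.
Hypothesis C_ge0 : forall x y, 0 <= C x y.

Let costs := [set r : R | exists pi0 P,
  is_markovian_coupling mX nuX mY nuY pi0 P /\ r = expected_cost pi0 P k C].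

Let costs_ge0 : lbound costs 0.
Proof. by move=> _ [pi0 [P [coupled ->]]]; apply: expected_cost_ge0 coupled. Qed.

Lemma dWL_ge0 : 0 <= dWL k mX nuX mY nuY C.
Proof.
rewrite /dWL -/costs; have [->|/set0P costs_n0] := eqVneq costs set0.
  by rewrite inf0.
exact: lb_le_inf.
Qed.

Lemma dWL_le_cost pi0 P : is_markovian_coupling mX nuX mY nuY pi0 P ->
  dWL k mX nuX mY nuY C <= expected_cost pi0 P k C.
Proof.
move=> coupled; apply: ge_inf; first by exists 0; apply: costs_ge0.
by exists pi0, P.
Qed.

End WLBounds.

Lemma nonincreasing_contracting_cvg0 (R : realType) (u : R ^nat) N (q : R) :
  nonincreasing_seq u -> (forall n, 0 <= u n) -> 0 <= q -> q < 1 ->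
  (forall n, u (n + N)%N <= q * u n) -> u @ \oo --> 0.
Proof.
move=> u_noninc u_ge0 q_ge0 q_lt1 u_contr.
have u_geom j : u (j * N)%N <= q ^+ j * u 0%N.
  elim: j => [|j IH]; first by rewrite mul1r.
  rewrite mulSnr exprS -mulrA; apply: (le_trans (u_contr _)).
  exact: ler_wpM2l.
have qu0_cvg0 : (fun j => q ^+ j * u 0%N) @ \oo --> 0.
  rewrite -(mul0r (u 0%N)); apply: cvgMr_tmp; apply: cvg_expr.
  by rewrite ger0_norm.
apply/cvgr0Pnorm_lt => e e_gt0.
have /cvgr0Pnorm_lt/(_ e e_gt0) [j0 _ j0_lt] := qu0_cvg0.
exists (j0 * N)%N => // n /= le_n.
rewrite ger0_norm //; apply: le_lt_trans (u_noninc _ _ le_n) _.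
apply: le_lt_trans (u_geom j0) _.
by have := j0_lt j0 (leqnn j0); rewrite /= ger0_norm // mulr_ge0 ?exprn_ge0.
Qed.

Section Coalescing.
Variables (R : realType) (X : finType) (m : X -> X -> R).
Hypothesis mK : is_markov_kernel m.

Let m_ge0 x y : 0 <= m x y. Proof. by case: (mK x). Qed.

Let m_sum1 x : \sum_y m x y = 1. Proof. by case: (mK x). Qed.

Definition coalesce (z w : X * X) : R :=
  if z.1 == z.2 then m z.1 w.1 * (w.1 == w.2)%:R else m z.1 w.1 * m z.2 w.2.

Lemma coalesce_coupling x y : is_coupling (m x) (m y) (coalesce (x, y)).
Proof.
rewrite /coalesce /=; case: eqP => [<-|_]; split.
- by move=> w; rewrite mulr_ge0 ?ler0n ?m_ge0.
- split=> a /=; last exact: (sumr_mul_eqr (m x)).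
  by under eq_bigr do rewrite eq_sym; apply: (sumr_mul_eqr (fun=> m x a)).
- by move=> w; rewrite mulr_ge0 ?m_ge0.
- by split=> a /=; rewrite -?big_distrr -?big_distrl /= m_sum1 ?mulr1 ?mul1r.
Qed.

Lemma coalesce_markov : is_markov_kernel coalesce.
Proof.
move=> [x y]; have [ge0 [sum1 _]] := coalesce_coupling x y; split => //.
by rewrite sumr_pair; under eq_bigr do rewrite sum1.
Qed.

Lemma coalesce_ge0 z w : 0 <= coalesce z w.
Proof. by case: (coalesce_markov z). Qed.

Definition meet_prob n z := \sum_w kpow coalesce n z w * (w.1 == w.2)%:R.

Lemma meet_prob0 z : meet_prob 0 z = (z.1 == z.2)%:R.
Proof. exact: (sumr_mul_eql (fun w => (w.1 == w.2)%:R)). Qed.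

Lemma meet_probS n z :
  meet_prob n.+1 z = \sum_w coalesce z w * meet_prob n w.
Proof.
rewrite /meet_prob; under eq_bigr do rewrite kpowSl big_distrl /=.
rewrite exchange_big /=; apply: eq_bigr => w _.
by rewrite big_distrr /=; apply: eq_bigr => v _; rewrite mulrA.
Qed.

Lemma meet_prob_ge0 n z : 0 <= meet_prob n z.
Proof.
apply: sumr_ge0 => w _; apply: mulr_ge0; last exact: ler0n.
exact: kpow_ge0 coalesce_markov _ _ _.
Qed.

Lemma meet_prob_diag n x : meet_prob n (x, x) = 1.
Proof.
elim: n x => [|n IH] x; first by rewrite meet_prob0 eqxx.
rewrite meet_probS sumr_pair /coalesce /= eqxx.
under eq_bigr => a _ do under eq_bigr => b _ do rewrite -mulrA.
under eq_bigr => a _ do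
  rewrite -big_distrr /= (sumr_mul_eql (fun b => meet_prob n (a, b))) IH mulr1.
exact: m_sum1.
Qed.

Lemma meet_prob_nondecreasing z : nondecreasing_seq (meet_prob ^~ z).
Proof.
apply/nondecreasing_seqP => n; elim: n z => [|n IH] [x y].
  have [<-|xy] := eqVneq x y; first by rewrite !meet_prob_diag.
  by rewrite meet_prob0 /= (negbTE xy) meet_prob_ge0.
rewrite [leRHS]meet_probS meet_probS; apply: ler_sum => w _.
by rewrite ler_wpM2l ?coalesce_ge0.
Qed.

Lemma overlap_le_meet_prob n x y : overlap m n x y <= meet_prob n (x, y).
Proof.
elim: n x y => [|n IH] x y; have [<-|xy] := eqVneq x y;
  rewrite ?meet_prob_diag ?overlap_le1 //.
  rewrite /overlap /= (sumr_mul_eql (fun u => (y == u)%:R)) eq_sym (negbTE xy).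
  exact: meet_prob_ge0.
rewrite overlapS meet_probS sumr_pair /coalesce /= (negbTE xy).
apply: ler_sum => a _; apply: ler_sum => b _.
by rewrite ler_wpM2l ?mulr_ge0 ?m_ge0.
Qed.

Lemma coalesce_contraction : irreducible m -> aperiodic m ->
  exists N (c : R), [/\ 0 <= c, c < 1 &
    forall z, 1 - meet_prob N z <= c * (z.1 != z.2)%:R].
Proof.
move=> irr aper.
have [N meetN_gt0] : exists N, forall z, 0 < meet_prob N z.
  apply: finite_uniform_threshold => [n z|[x y]].
    by move=> /lt_le_trans; apply; apply: meet_prob_nondecreasing.
  have [n overlap_gt0] := overlap_gt0 mK x y irr aper.
  by exists n; apply: lt_le_trans overlap_gt0 (overlap_le_meet_prob _ _ _).
pose eps := \big[Num.min/1]_z meet_prob N z.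
have eps_gt0 : 0 < eps by apply/bigmin_gtP; split=> // z _; apply: meetN_gt0.
have eps_le1 : eps <= 1 by apply: bigmin_le_id.
exists N, (1 - eps); split; [lra | lra | move=> [x y] /=].
case: eqP => [<-|_] /=; first by rewrite meet_prob_diag subrr mulr0.
by rewrite mulr1 lerB // bigmin_le.
Qed.

Section CoalescedLaw.
Variable pi0 : X * X -> R.
Hypothesis pi0_ge0 : forall z, 0 <= pi0 z.

Definition apart_prob k :=
  \sum_z coupling_law pi0 (fun=> coalesce) k z * (z.1 != z.2)%:R.

Let law_ge0 k z : 0 <= coupling_law pi0 (fun=> coalesce) k z.
Proof. by apply: coupling_law_ge0 => // t; apply: coalesce_ge0. Qed.

Lemma apart_probD k n : apart_prob (k + n) =
  \sum_z coupling_law pi0 (fun=> coalesce) k z * (1 - meet_prob n z).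
Proof.
rewrite /apart_prob; under eq_bigr do rewrite coupling_lawD big_distrl /=.
rewrite exchange_big /=; apply: eq_bigr => z _.
under eq_bigr do rewrite -mulrA natr_negb mulrBr mulr1.
by rewrite -mulr_sumr sumrB (kpow_sum1 coalesce_markov).
Qed.

Lemma apart_prob_contraction n c :
  (forall z, 1 - meet_prob n z <= c * (z.1 != z.2)%:R) ->
  forall k, apart_prob (k + n) <= c * apart_prob k.
Proof.
move=> meet_n k; rewrite apart_probD /apart_prob mulr_sumr.
by apply: ler_sum => z _; rewrite mulrCA ler_wpM2l.
Qed.

Lemma apart_prob_ge0 k : 0 <= apart_prob k.
Proof. by apply: sumr_ge0 => z _; rewrite mulr_ge0 ?ler0n. Qed.

Lemma apart_prob_nonincreasing : nonincreasing_seq apart_prob.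
Proof.
apply/nonincreasing_seqP => k; rewrite -addn1 -[leRHS]mul1r.
apply: apart_prob_contraction => z; rewrite mul1r natr_negb -meet_prob0 lerB //.
exact: meet_prob_nondecreasing.
Qed.

Lemma expected_cost_le_apart (d : X -> X -> R) k : is_pseudometric d ->
  expected_cost pi0 (fun=> coalesce) k d <= (\sum_z d z.1 z.2) * apart_prob k.
Proof.
move=> dP; have [d0 _] := dP; rewrite /apart_prob mulr_sumr.
apply: ler_sum => -[x y] _; rewrite mulrCA ler_wpM2l //=.
case: eqP => [<-|_] /=.
  by rewrite d0 mulr_ge0 ?ler0n ?sumr_ge0 // => z _; apply: pseudometric_ge0.
rewrite mulr1 (bigD1 (x, y)) //= lerDl.
by apply: sumr_ge0 => z _; apply: pseudometric_ge0.
Qed.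

End CoalescedLaw.

End Coalescing.

Theorem lemma25 (R : realType) (X : finType) (d : X -> X -> R)
  (m : X -> X -> R) (nu1 nu2 : X -> R) :
  is_pseudometric d ->
  is_markov_kernel m -> irreducible m -> aperiodic m ->
  is_prob nu1 -> is_prob nu2 ->
  (fun k : nat => dWL k m nu1 m nu2 d) @ \oo --> (0:R)%R.
Proof.
move=> dP mK irr aper nu1P nu2P.
have d_ge0 := pseudometric_ge0 dP.
pose pi0 z := nu1 z.1 * nu2 z.2.
have coupled : is_markovian_coupling m nu1 m nu2 pi0 (fun=> coalesce m).
  by split=> [|_ x y]; [apply: product_coupling | apply: coalesce_coupling].
have pi0_ge0 : forall z, 0 <= pi0 z by case: coupled => -[].
have [N [c [c_ge0 c_lt1 meet_N]]] := coalesce_contraction mK irr aper.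
have apart_cvg0 : apart_prob m pi0 @ \oo --> 0.
  apply: (nonincreasing_contracting_cvg0 _ _ c_ge0 c_lt1).
  - exact: apart_prob_nonincreasing.
  - exact: apart_prob_ge0.
  - exact: apart_prob_contraction.
pose M := \sum_z d z.1 z.2.
apply: (@squeeze_cvgr _ _ _ _ (cst 0) (fun k => M * apart_prob m pi0 k)).
- apply: nearW => k; rewrite dWL_ge0 //=.
  apply: le_trans (dWL_le_cost k d_ge0 coupled) _.
  exact: expected_cost_le_apart.
- exact: cvg_cst.
- by have /(_ _) := cvgMl_tmp (a := M) apart_cvg0; rewrite mulr0.
Qed.
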